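(* Let $n\ge1$, let $q_1,\dots,q_n$ be positive integers and $c_1,\dots,c_n>0$. For $y_0\in\mathbb{R}$ let $\Gamma_n(x)=y_0-\sum_{j=1}^n c_j\sin(2\pi q_jx)$ and let $\mu_n$ be the probability measure on $\mathbb{T}^2$ obtained as the push-forward of Lebesgue measure on $[0,1]$ under $x\mapsto (x,\Gamma_n(x)) \bmod \mathbb{Z}^2$ (i.e. $\int f\,d\mu_n=\int_0^1 f(x,\Gamma_n(x))\,dx$). Then for every trigonometric polynomial $f$ on $\mathbb{T}^2$ and every $\varepsilon>0$ there exist numbers $\tilde c_n=\tilde c_n(\varepsilon,f)$ and $\tilde q_n=\tilde q_n(\varepsilon,f,c_1,\dots,c_n,q_1,\dots,q_{n-1})$, independent of $y_0$, such that if $c_n>\tilde c_n$ and $q_n>\tilde q_n$ then $$\left|\int_{\mathbb{T}^2}f\,d\mu_n-\int_{\mathbb{T}^2}f(z)\,dz\right|<\varepsilon .$$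
   Context: $\mathbb{T}^2=\mathbb{R}^2/\mathbb{Z}^2$ with Lebesgue measure $dz$. (In the paper, when $q_j=4s_jq_{j-1}$ for natural $s_j$, the graph of $\Gamma_n$ is an invariant curve of $G_n(\alpha)(x,y)=(x+\alpha,\,y+g_n(x)-g_n(x+\alpha))$, $g_n=\sum_{j\le n}c_j\sin 2\pi q_jx$, and $\mu_n$ is its invariant probability measure on that curve for irrational $\alpha$.) *)

From Stdlib Require Import Reals ZArith List.
From Coquelicot Require Import Coquelicot.
Open Scope R_scope.

Definition cexpi (t : R) : C := (cos t, sin t).

(* A trigonometric polynomial on T^2 = R^2/Z^2, given by its finitely many
   coefficients: f(x,y) = sum_{(k,l,a) in P} a * exp(2 pi i (k x + l y)). *)
Definition trig_poly2 := list (Z * Z * C).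

Definition tp_eval (P : trig_poly2) (x y : R) : C :=
  fold_right (fun t acc =>
     let '(k, l, a) := t in
     Cplus (Cmult a (cexpi (2 * PI * (IZR k * x + IZR l * y)))) acc)
   (RtoC 0) P.

Fixpoint sum1n (u : nat -> R) (n : nat) : R :=
  match n with
  | O => 0
  | S m => sum1n u m + u (S m)
  end.

Definition Gamma (n : nat) (c : nat -> R) (q : nat -> nat) (y0 x : R) : R :=
  y0 - sum1n (fun j => c j * sin (2 * PI * INR (q j) * x)) n.

Definition int_mu (n : nat) (c : nat -> R) (q : nat -> nat) (y0 : R)
  (P : trig_poly2) : C :=
  @RInt C_R_CompleteNormedModule (fun x => tp_eval P x (Gamma n c q y0 x)) 0 1.

(* int_{T^2} f(z) dz, with T^2 identified with the fundamental domain [0,1]^2 *)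
Definition int_T2 (P : trig_poly2) : C :=
  @RInt C_R_CompleteNormedModule (fun x => @RInt C_R_CompleteNormedModule (fun y => tp_eval P x y) 0 1) 0 1.

From Stdlib Require Import Reals ZArith List Lra Lia.
From Coquelicot Require Import Coquelicot.
Open Scope R_scope.

(* Write Γ_n(x) = y0 - S(x) - c_n sin(2π q_n x), where S collects the first n-1 terms.  For a
   character e(kx + ly) with l ≠ 0 (characters with l = 0 have the same integral against μ_n and
   against dz), e(kx + lΓ_n(x)) = G(x) h(q_n x) with G(x) = e(kx + l y0 - l S(x)) and the 1-periodic
   h(t) = e(-l c_n sin 2πt).  The derivative of G is bounded independently of y0 and q_n, so
   integrating by parts against a periodic primitive of h - ∫h shows that ∫ G(x) h(q_n x) dx tends to
   (∫G)(∫h) as q_n → ∞.  Finally ∫h is small once c_n is large: away from the stationary points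
   t = ±1/4 of sin 2πt this is van der Corput's first-derivative test, and the neighbourhoods of
   those points have small measure.  Real and imaginary parts are both of the form
   ∫ cos(phase + ψ), so all real estimates are proved uniformly in the shift ψ. *)

Lemma sum1n_continuous (u : nat -> R -> R) m x :
  (forall j, continuous (u j) x) -> continuous (fun x => sum1n (fun j => u j x) m) x.
Proof.
  intros H. induction m as [|m IH]; simpl; [apply continuous_const|].
  apply (continuous_plus (V := R_NormedModule) (fun x => sum1n (fun j => u j x) m) (u (S m)));
    auto.
Qed.

Ltac solve_continuous :=
  repeat match goal with
    | |- continuous (fun _ => cos _) _ => apply (continuous_comp _ cos); [|apply continuous_cos]
    | |- continuous (fun _ => sin _) _ => apply (continuous_comp _ sin); [|apply continuous_sin]
    | |- continuous (fun _ => _ + _) _ => apply (continuous_plus (V := R_NormedModule))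
    | |- continuous (fun _ => _ - _) _ => apply (continuous_minus (V := R_NormedModule))
    | |- continuous (fun _ => - _) _ => apply (continuous_opp (V := R_NormedModule))
    | |- continuous (fun _ => _ * _) _ => apply (continuous_mult (K := R_AbsRing))
    (* unification eta-reduces [fun t => c * t] to [Rmult c] *)
    | |- continuous (Rmult ?c) _ => apply (continuous_mult (K := R_AbsRing) (fun _ => c) (fun t => t))
    | |- continuous (fun t => t) _ => apply continuous_id
    | |- continuous (fun x => sum1n (fun j => @?u j x) _) _ =>
        apply (sum1n_continuous u); intros; cbv beta
    | |- continuous (fun _ => ?c) _ => apply continuous_const
    | H : forall x, continuous ?h x |- continuous ?h _ => apply H
    | H : forall x, continuous ?h x |- continuous (fun t => ?h (@?u t)) _ =>
        apply (continuous_comp u h); [|apply H]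
    end.

Ltac solve_ex_RInt :=
  apply (ex_RInt_continuous (V := R_CompleteNormedModule)); intros; solve_continuous.

Lemma continuous_of_is_derive (f : R -> R) x l : is_derive f x l -> continuous f x.
Proof. intros H. apply (ex_derive_continuous (V := R_NormedModule)). exists l; exact H. Qed.

Section PeriodicIntegrals.

Variable h : R -> R.
Hypothesis h_cont : forall x, continuous h x.

Lemma RInt_Chasles_continuous a b c : RInt h a b + RInt h b c = RInt h a c.
Proof. apply (RInt_Chasles (V := R_CompleteNormedModule)); solve_ex_RInt. Qed.

Hypothesis h_periodic : forall t, h (t + 1) = h t.

Lemma RInt_periodic_shift a : RInt h a (a + 1) = RInt h 0 1.
Proof.
  assert (Htail : RInt h 1 (a + 1) = RInt h 0 a).
  { pose proof (RInt_comp_lin (V := R_CompleteNormedModule) h 1 1 0 a) as E.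
    replace (1 * 0 + 1) with 1 in E by ring. replace (1 * a + 1) with (a + 1) in E by ring.
    rewrite <- E by solve_ex_RInt.
    apply RInt_ext. intros x _. unfold scal; simpl. unfold mult; simpl.
    rewrite Rmult_1_l, Rmult_1_l. apply h_periodic. }
  rewrite <- (RInt_Chasles_continuous a 1 (a + 1)), Htail,
          <- (RInt_Chasles_continuous 0 a 1).
  apply Rplus_comm.
Qed.

End PeriodicIntegrals.

Lemma abs_RInt_le_length (h : R -> R) a b : a <= b -> (forall x, continuous h x) ->
  (forall t, Rabs (h t) <= 1) -> Rabs (RInt h a b) <= b - a.
Proof.
  intros Hab Hc Hb. rewrite <- (Rmult_1_r (b - a)).
  apply abs_RInt_le_const; [exact Hab | solve_ex_RInt | auto].
Qed.

(** * Oscillatory integrals *)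

Lemma continuous_div_sqr (u v : R -> R) t :
  continuous u t -> continuous v t -> v t <> 0 -> continuous (fun s => u s / (v s * v s)) t.
Proof.
  intros Hu Hv Hnz. unfold Rdiv. apply (continuous_mult (K := R_AbsRing)); auto.
  apply continuous_Rinv_comp; [apply (continuous_mult (K := R_AbsRing)); auto|].
  apply Rmult_integral_contrapositive; split; exact Hnz.
Qed.

Lemma RInt_cos_by_parts (f f1 f2 : R -> R) (a b : R) :
  a <= b -> (forall t, is_derive f t (f1 t)) -> (forall t, is_derive f1 t (f2 t)) ->
  (forall t, continuous f2 t) -> (forall t, a <= t <= b -> f1 t <> 0) ->
  RInt (fun t => cos (f t)) a b
  = sin (f b) / f1 b - sin (f a) / f1 a + RInt (fun t => sin (f t) * f2 t / (f1 t * f1 t)) a b.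
Proof.
  intros Hab Df Df1 Hf2 Hnz.
  assert (Hf : forall t, continuous f t) by (intros t; exact (continuous_of_is_derive _ _ _ (Df t))).
  assert (Hf1 : forall t, continuous f1 t) by (intros t; exact (continuous_of_is_derive _ _ _ (Df1 t))).
  assert (Hrange : forall t, Rmin a b <= t <= Rmax a b -> a <= t <= b)
    by (rewrite Rmin_left, Rmax_right; auto).
  set (F t := sin (f t) / f1 t).
  set (g t := sin (f t) * f2 t / (f1 t * f1 t)).
  assert (Hg : forall t, a <= t <= b -> continuous g t).
  { intros t Ht. apply continuous_div_sqr; [solve_continuous | auto | apply Hnz; auto]. }
  assert (Hexg : ex_RInt g a b)
    by (apply (ex_RInt_continuous (V := R_CompleteNormedModule)); auto).
  assert (HI : is_RInt (fun t => cos (f t) - g t) a b (F b - F a)).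
  { apply (is_RInt_derive F); intros t Ht.
    - unfold F, g. auto_derive.
      + split; [exists (f1 t); apply Df | split; [exists (f2 t); apply Df1 | split; auto]].
      + replace (Derive (fun x : R => f x) t) with (f1 t)
          by (symmetry; apply is_derive_unique, Df).
        replace (Derive (fun x : R => f1 x) t) with (f2 t)
          by (symmetry; apply is_derive_unique, Df1).
        field. apply Hnz; auto.
    - apply (continuous_minus (V := R_NormedModule)); [solve_continuous|].
      auto. }
  change (sin (f b) / f1 b - sin (f a) / f1 a) with (F b - F a). fold g.
  rewrite <- (is_RInt_unique _ _ _ _ HI).
  pose proof (RInt_plus (V := R_CompleteNormedModule) _ _ a b (ex_intro _ _ HI) Hexg) as E.
  simpl in E. unfold plus in E; simpl in E. rewrite <- E.
  apply RInt_ext. intros x _. unfold plus; simpl. ring.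
Qed.

Lemma van_der_Corput_cos (f f1 f2 : R -> R) (a b m M : R) :
  a <= b -> 0 < m ->
  (forall t, is_derive f t (f1 t)) -> (forall t, is_derive f1 t (f2 t)) ->
  (forall t, continuous f2 t) ->
  (forall t, a <= t <= b -> m <= Rabs (f1 t)) ->
  (forall t, a <= t <= b -> Rabs (f2 t) <= M) ->
  Rabs (RInt (fun t => cos (f t)) a b) <= 2 / m + (b - a) * (M / (m * m)).
Proof.
  intros Hab Hm Df Df1 Hf2 Hlow Hup.
  assert (Hnz : forall t, a <= t <= b -> f1 t <> 0).
  { intros t Ht E. specialize (Hlow t Ht). rewrite E, Rabs_R0 in Hlow. lra. }
  rewrite (RInt_cos_by_parts f f1 f2 a b Hab Df Df1 Hf2 Hnz).
  assert (HF : forall t, a <= t <= b -> Rabs (sin (f t) / f1 t) <= / m).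
  { intros t Ht. unfold Rdiv. rewrite Rabs_mult, Rabs_inv, <- (Rmult_1_l (/ m)).
    apply Rmult_le_compat; try apply Rabs_pos.
    - left; apply Rinv_0_lt_compat. pose proof (Hlow t Ht); lra.
    - apply Rabs_le, SIN_bound.
    - apply Rinv_le_contravar; auto. }
  assert (HRg : Rabs (RInt (fun t => sin (f t) * f2 t / (f1 t * f1 t)) a b)
                <= (b - a) * (M / (m * m))).
  { apply abs_RInt_le_const; auto.
    - apply (ex_RInt_continuous (V := R_CompleteNormedModule)). intros t Ht.
      rewrite Rmin_left, Rmax_right in Ht by auto.
      assert (Hf : forall t, continuous f t)
        by (intros s; exact (continuous_of_is_derive _ _ _ (Df s))).
      apply continuous_div_sqr; [solve_continuous | | apply Hnz; auto].
      exact (continuous_of_is_derive _ _ _ (Df1 t)).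
    - intros t Ht. unfold Rdiv.
      rewrite !Rabs_mult, Rabs_inv, Rabs_mult, <- (Rmult_1_l M).
      pose proof (Hlow t Ht).
      apply Rmult_le_compat.
      + apply Rmult_le_pos; apply Rabs_pos.
      + left; apply Rinv_0_lt_compat, Rmult_lt_0_compat; lra.
      + apply Rmult_le_compat; try apply Rabs_pos; auto. apply Rabs_le, SIN_bound.
      + apply Rinv_le_contravar; [apply Rmult_lt_0_compat; lra|].
        apply Rmult_le_compat; lra. }
  pose proof (HF a (conj (Rle_refl a) Hab)). pose proof (HF b (conj Hab (Rle_refl b))).
  set (I := RInt _ a b) in HRg |- *.
  pose proof (Rabs_triang (sin (f b) / f1 b - sin (f a) / f1 a) I).
  pose proof (Rabs_triang (sin (f b) / f1 b) (- (sin (f a) / f1 a))).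
  rewrite Rabs_Ropp in *. unfold Rminus, Rdiv in *. lra.
Qed.

Lemma van_der_Corput_mu_sin (mu psi a b m0 : R) :
  a <= b -> b - a <= 1 -> 0 < m0 -> 0 < Rabs mu ->
  (forall t, a <= t <= b -> m0 <= Rabs (cos (2 * PI * t))) ->
  Rabs (RInt (fun t => cos (mu * sin (2 * PI * t) + psi)) a b)
    <= (/ m0 + / (m0 * m0)) / Rabs mu.
Proof.
  intros Hab Hlen Hm0 Hmu Hcos. pose proof PI_RGT_0. pose proof PI2_1.
  set (A := Rabs mu) in *.
  assert (HA : 0 < 2 * PI * A * m0)
    by (apply Rmult_lt_0_compat; auto; apply Rmult_lt_0_compat; auto; lra).
  eapply Rle_trans.
  - apply (van_der_Corput_cos _ (fun t => mu * (2 * PI * cos (2 * PI * t)))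
             (fun t => - (mu * (4 * PI * PI * sin (2 * PI * t))))
             a b (2 * PI * A * m0) (4 * PI * PI * A)); auto.
    + intros t. auto_derive; auto. ring.
    + intros t. auto_derive; auto. ring.
    + intros x. solve_continuous.
    + intros t Ht. cbv beta. unfold A.
      rewrite !Rabs_mult, (Rabs_right 2), (Rabs_right PI) by lra.
      specialize (Hcos t Ht). pose proof (Rabs_pos mu).
      assert (0 <= 2 * PI * Rabs mu) by nra. nra.
    + intros t _. cbv beta. unfold A.
      rewrite Rabs_Ropp, !Rabs_mult, (Rabs_right 4), (Rabs_right PI) by lra.
      replace (4 * PI * PI * Rabs mu) with (Rabs mu * (4 * PI * PI * 1)) by ring.
      apply Rmult_le_compat_l; [apply Rabs_pos|].
      apply Rmult_le_compat_l; [nra | apply Rabs_le, SIN_bound].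
  - replace (2 / (2 * PI * A * m0)) with (/ PI * (/ m0 / A)) by (field; lra).
    replace (4 * PI * PI * A / (2 * PI * A * m0 * (2 * PI * A * m0))) with (/ (m0 * m0) / A)
      by (field; lra).
    assert (0 < / m0 / A) by (apply Rdiv_lt_0_compat; [apply Rinv_0_lt_compat|]; lra).
    assert (0 < / (m0 * m0) / A)
      by (apply Rdiv_lt_0_compat; [apply Rinv_0_lt_compat, Rmult_lt_0_compat|]; lra).
    assert (/ PI <= 1) by (rewrite <- Rinv_1; apply Rinv_le_contravar; lra).
    unfold Rdiv. rewrite Rmult_plus_distr_r.
    unfold Rdiv in *. apply Rplus_le_compat; nra.
Qed.

Lemma RInt_periodic_split (g : R -> R) (d : R) :
  0 <= d ->
  (forall x, continuous g x) -> (forall t, g (t + 1) = g t) -> (forall t, Rabs (g t) <= 1) ->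
  Rabs (RInt g 0 1)
    <= 4 * d + Rabs (RInt g (-1/4 + d) (1/4 - d)) + Rabs (RInt g (1/4 + d) (3/4 - d)).
Proof.
  intros Hd Hc Hp Hb.
  rewrite <- (RInt_periodic_shift g Hc Hp (-1/4)).
  replace (-1/4 + 1) with (3/4) by field.
  rewrite <- (RInt_Chasles_continuous g Hc (-1/4) (-1/4 + d)),
          <- (RInt_Chasles_continuous g Hc (-1/4 + d) (1/4 - d)),
          <- (RInt_Chasles_continuous g Hc (1/4 - d) (1/4 + d)),
          <- (RInt_Chasles_continuous g Hc (1/4 + d) (3/4 - d)).
  pose proof (abs_RInt_le_length g (-1/4) (-1/4 + d) ltac:(lra) Hc Hb).
  pose proof (abs_RInt_le_length g (1/4 - d) (1/4 + d) ltac:(lra) Hc Hb).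
  pose proof (abs_RInt_le_length g (3/4 - d) (3/4) ltac:(lra) Hc Hb).
  set (a1 := RInt g (-1/4) (-1/4 + d)) in *.
  set (a2 := RInt g (-1/4 + d) (1/4 - d)) in *.
  set (a3 := RInt g (1/4 - d) (1/4 + d)) in *.
  set (a4 := RInt g (1/4 + d) (3/4 - d)) in *.
  set (a5 := RInt g (3/4 - d) (3/4)) in *.
  pose proof (Rabs_triang a1 (a2 + (a3 + (a4 + a5)))).
  pose proof (Rabs_triang a2 (a3 + (a4 + a5))).
  pose proof (Rabs_triang a3 (a4 + a5)).
  pose proof (Rabs_triang a4 a5).
  simpl in *. lra.
Qed.

Lemma sin_margin_le_cos (d t : R) :
  0 < d -> Rabs t <= 1/4 - d -> sin (2 * PI * d) <= cos (2 * PI * t).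
Proof.
  intros Hd Ht. pose proof PI_RGT_0.
  rewrite <- cos_shift.
  destruct (Rle_or_lt 0 t) as [Hpos|Hneg].
  - rewrite Rabs_right in Ht by lra. apply cos_decr_1; nra.
  - rewrite Rabs_left in Ht by lra. rewrite <- (cos_neg (2 * PI * t)). apply cos_decr_1; nra.
Qed.

Lemma sin_2PI_periodic (t : R) : sin (2 * PI * (t + 1)) = sin (2 * PI * t).
Proof.
  replace (2 * PI * (t + 1)) with (2 * PI * t + 2 * INR 1 * PI) by (simpl; ring).
  apply sin_period.
Qed.

(* The windows of width 2d around t = ±1/4 contribute at most 4d; elsewhere
   |cos 2πt| >= sin 2πd and van der Corput gives O(1/|μ|). *)
Lemma RInt_cos_mu_sin_vanishes (e : R) : 0 < e ->
  exists Lam, 0 <= Lam /\ forall mu psi, Lam < Rabs mu ->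
  Rabs (RInt (fun t => cos (mu * sin (2 * PI * t) + psi)) 0 1) < e.
Proof.
  intros He. pose proof PI_RGT_0.
  set (d := Rmin e 1 / 16).
  assert (Hd : 0 < d) by (unfold d; pose proof (Rmin_glb_lt e 1 0 He Rlt_0_1); lra).
  assert (Hde : 4 * d <= e / 4) by (unfold d; pose proof (Rmin_l e 1); lra).
  assert (Hd1 : d <= 1/16) by (unfold d; pose proof (Rmin_r e 1); lra).
  set (m0 := sin (2 * PI * d)).
  assert (Hm0 : 0 < m0) by (apply sin_gt_0; nra).
  set (C := / m0 + / (m0 * m0)).
  assert (HC : 0 < C).
  { unfold C. pose proof (Rinv_0_lt_compat _ Hm0).
    pose proof (Rinv_0_lt_compat _ (Rmult_lt_0_compat _ _ Hm0 Hm0)). lra. }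
  exists (4 * C / e). split; [left; apply Rdiv_lt_0_compat; lra|].
  intros mu psi Hmu.
  assert (HA : 0 < Rabs mu) by (pose proof (Rdiv_lt_0_compat (4 * C) e ltac:(lra) He); lra).
  assert (HCmu : C / Rabs mu < e / 4).
  { apply (Rmult_lt_reg_r (4 * Rabs mu / e)); [apply Rdiv_lt_0_compat; lra|].
    replace (C / Rabs mu * (4 * Rabs mu / e)) with (4 * C / e) by (field; lra).
    replace (e / 4 * (4 * Rabs mu / e)) with (Rabs mu) by (field; lra). exact Hmu. }
  assert (Hleft : forall t, -1/4 + d <= t <= 1/4 - d -> m0 <= Rabs (cos (2 * PI * t))).
  { intros t Ht. pose proof (sin_margin_le_cos d t Hd ltac:(apply Rabs_le; lra)) as Hcos.
    fold m0 in Hcos. rewrite Rabs_right; lra. }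
  assert (Hright : forall t, 1/4 + d <= t <= 3/4 - d -> m0 <= Rabs (cos (2 * PI * t))).
  { intros t Ht. pose proof (sin_margin_le_cos d (t - 1/2) Hd ltac:(apply Rabs_le; lra)) as Hcos.
    fold m0 in Hcos. replace (2 * PI * t) with (2 * PI * (t - 1/2) + PI) by field.
    rewrite neg_cos, Rabs_Ropp, Rabs_right; lra. }
  pose proof (van_der_Corput_mu_sin mu psi (-1/4 + d) (1/4 - d) m0
                ltac:(lra) ltac:(lra) Hm0 HA Hleft) as Bleft.
  pose proof (van_der_Corput_mu_sin mu psi (1/4 + d) (3/4 - d) m0
                ltac:(lra) ltac:(lra) Hm0 HA Hright) as Bright.
  fold C in Bleft, Bright.
  pose proof (RInt_periodic_split (fun t => cos (mu * sin (2 * PI * t) + psi)) d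
                ltac:(lra) ltac:(intros; solve_continuous)
                ltac:(intros t; cbv beta; rewrite sin_2PI_periodic; reflexivity)
                ltac:(intros t; apply Rabs_le, COS_bound)).
  lra.
Qed.

(** * A fast periodic factor *)

Section MeanFreePrimitive.

Variables (h0 : R -> R) (M : R).
Hypothesis h0_cont : forall x, continuous h0 x.
Hypothesis h0_periodic : forall t, h0 (t + 1) = h0 t.
Hypothesis h0_mean_free : RInt h0 0 1 = 0.
Hypothesis h0_bounded : forall t, Rabs (h0 t) <= M.

Lemma RInt_mean_free_periodic t : RInt h0 0 (t + 1) = RInt h0 0 t.
Proof.
  rewrite <- (RInt_Chasles_continuous h0 h0_cont 0 t (t + 1)),
          (RInt_periodic_shift h0 h0_cont h0_periodic), h0_mean_free.
  apply Rplus_0_r.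
Qed.

Lemma RInt_mean_free_bounded t : 0 <= t -> Rabs (RInt h0 0 t) <= M.
Proof.
  assert (Hbase : forall s, 0 <= s <= 1 -> Rabs (RInt h0 0 s) <= M).
  { intros s Hs. apply Rle_trans with ((s - 0) * M).
    - apply abs_RInt_le_const; [lra | solve_ex_RInt | auto].
    - pose proof (Rabs_pos (h0 0)). pose proof (h0_bounded 0).
      apply Rle_trans with (1 * M); [apply Rmult_le_compat_r|]; lra. }
  intros Ht. destruct (INR_unbounded t) as [N HN].
  revert t Ht HN. induction N as [|N IH]; intros t Ht HN.
  - simpl in HN. lra.
  - destruct (Rle_or_lt t 1) as [Hle|Hgt]; [apply Hbase; lra|].
    replace t with ((t - 1) + 1) by ring. rewrite RInt_mean_free_periodic.
    rewrite S_INR in HN. apply IH; lra.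
Qed.

End MeanFreePrimitive.

Lemma RInt_mul_dilated_by_parts (G G1 K k : R -> R) (q : R) :
  0 < q -> (forall x, is_derive G x (G1 x)) -> (forall x, continuous G1 x) ->
  (forall t, is_derive K t (k t)) -> (forall t, continuous k t) ->
  RInt (fun x => G x * k (q * x)) 0 1
  = G 1 * K q / q - G 0 * K 0 / q - RInt (fun x => G1 x * K (q * x) / q) 0 1.
Proof.
  intros Hq DG HG1 DK Hk.
  assert (HG : forall x, continuous G x) by (intros x; exact (continuous_of_is_derive _ _ _ (DG x))).
  assert (HK : forall t, continuous K t) by (intros t; exact (continuous_of_is_derive _ _ _ (DK t))).
  set (F x := G x * K (q * x) / q).
  set (g x := G1 x * K (q * x) / q).
  assert (HFTC : is_RInt (fun x => g x + G x * k (q * x)) 0 1 (F 1 - F 0)).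
  { apply (is_RInt_derive (V := R_CompleteNormedModule) F); intros x _.
    - unfold F, g. auto_derive.
      + split; [exists (G1 x); apply DG|]. split; [|auto].
        exists (k (q * x)). apply DK.
      + replace (Derive (fun x : R => G x) x) with (G1 x) by (symmetry; apply is_derive_unique, DG).
        replace (Derive (fun x : R => K x) (q * x)) with (k (q * x))
          by (symmetry; apply is_derive_unique, DK).
        field. lra.
    - unfold g, Rdiv. solve_continuous. }
  assert (Hg : is_RInt g 0 1 (RInt g 0 1))
    by (apply (RInt_correct (V := R_CompleteNormedModule)); unfold g, Rdiv; solve_ex_RInt).
  pose proof (is_RInt_minus _ _ _ _ _ _ HFTC Hg) as Hdiff.
  rewrite (is_RInt_unique (fun x => G x * k (q * x)) 0 1 (minus (F 1 - F 0) (RInt g 0 1))).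
  - unfold minus, plus, opp; simpl. unfold F. rewrite Rmult_1_r, Rmult_0_r. ring.
  - eapply is_RInt_ext; [|exact Hdiff]. intros x _.
    unfold minus, plus, opp; simpl. ring.
Qed.

Section CenteredPrimitive.

Variable h : R -> R.
Hypothesis h_cont : forall x, continuous h x.
Hypothesis h_periodic : forall t, h (t + 1) = h t.
Hypothesis h_bounded : forall t, Rabs (h t) <= 1.

Let h0 t := h t - RInt h 0 1.

Lemma RInt_centered_bounded t : 0 <= t -> Rabs (RInt h0 0 t) <= 2.
Proof.
  assert (Hm : Rabs (RInt h 0 1) <= 1)
    by (pose proof (abs_RInt_le_length h 0 1 ltac:(lra) h_cont h_bounded); lra).
  apply RInt_mean_free_bounded.
  - intros x. unfold h0. solve_continuous.
  - intros s. unfold h0. rewrite h_periodic. reflexivity.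
  - unfold h0. rewrite (RInt_minus (V := R_CompleteNormedModule) h (fun _ => RInt h 0 1))
      by solve_ex_RInt.
    rewrite RInt_const. unfold minus, plus, opp, scal; simpl. unfold mult; simpl. ring.
  - intros s. unfold h0. pose proof (Rabs_triang (h s) (- RInt h 0 1)) as Htri.
    rewrite Rabs_Ropp in Htri. pose proof (h_bounded s). unfold Rminus. lra.
Qed.

Lemma is_derive_centered_primitive t : is_derive (fun t => RInt h0 0 t) t (h0 t).
Proof.
  apply (is_derive_RInt (V := R_NormedModule) h0 _ 0 t).
  - apply filter_forall. intros s. apply (RInt_correct (V := R_CompleteNormedModule)).
    unfold h0; solve_ex_RInt.
  - unfold h0. solve_continuous.
Qed.

End CenteredPrimitive.

Lemma Rabs_mult_div_le (u v U V q : R) :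
  0 < q -> Rabs u <= U -> Rabs v <= V -> Rabs (u * v / q) <= U * V / q.
Proof.
  intros Hq Hu Hv. unfold Rdiv. rewrite !Rabs_mult, (Rabs_right (/ q))
    by (left; apply Rinv_0_lt_compat; auto).
  apply Rmult_le_compat_r; [left; apply Rinv_0_lt_compat; auto|].
  apply Rmult_le_compat; try apply Rabs_pos; auto.
Qed.

Lemma RInt_mul_dilated_periodic (G G1 h : R -> R) (B L q : R) :
  0 < q -> (forall x, is_derive G x (G1 x)) -> (forall x, continuous G1 x) ->
  (forall x, Rabs (G x) <= B) -> (forall x, Rabs (G1 x) <= L) ->
  (forall t, continuous h t) -> (forall t, h (t + 1) = h t) -> (forall t, Rabs (h t) <= 1) ->
  Rabs (RInt (fun x => G x * h (q * x)) 0 1 - RInt G 0 1 * RInt h 0 1)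
    <= (4 * B + 2 * L) / q.
Proof.
  intros Hq DG HG1 HB HL Hh Hper Hb.
  assert (HG : forall x, continuous G x) by (intros x; exact (continuous_of_is_derive _ _ _ (DG x))).
  set (m := RInt h 0 1).
  set (K t := RInt (fun s => h s - m) 0 t).
  assert (HKbnd : forall x, 0 <= x <= 1 -> Rabs (K (q * x)) <= 2)
    by (intros x Hx; apply RInt_centered_bounded; auto; nra).
  assert (Hsplit : RInt (fun x => G x * h (q * x)) 0 1 - RInt G 0 1 * m
                   = RInt (fun x => G x * (h (q * x) - m)) 0 1).
  { assert (E1 : ex_RInt (fun x => G x * h (q * x)) 0 1) by solve_ex_RInt.
    assert (E2 : ex_RInt G 0 1) by solve_ex_RInt.
    assert (Hlin : is_RInt (fun x => G x * (h (q * x) - m)) 0 1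
                     (minus (RInt (fun x => G x * h (q * x)) 0 1) (scal m (RInt G 0 1)))).
    { eapply is_RInt_ext; [|exact (is_RInt_minus _ _ _ _ _ _ (RInt_correct _ _ _ E1)
                                      (is_RInt_scal _ _ _ m _ (RInt_correct _ _ _ E2)))].
      intros x _. unfold minus, plus, opp, scal; simpl. unfold mult; simpl. ring. }
    rewrite (is_RInt_unique _ _ _ _ Hlin).
    unfold minus, plus, opp, scal; simpl. unfold mult; simpl. ring. }
  assert (DK : forall t, is_derive K t (h t - m)) by exact (is_derive_centered_primitive h Hh).
  assert (HK : forall t, continuous K t) by (intros t; exact (continuous_of_is_derive _ _ _ (DK t))).
  rewrite Hsplit, (RInt_mul_dilated_by_parts G G1 K (fun s => h s - m) q Hq DG HG1 DK
                     ltac:(intros; solve_continuous)).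
  pose proof (Rabs_mult_div_le _ _ _ _ _ Hq (HB 1) (HKbnd 1 ltac:(lra))) as HF1.
  pose proof (Rabs_mult_div_le _ _ _ _ _ Hq (HB 0) (HKbnd 0 ltac:(lra))) as HF0.
  rewrite Rmult_1_r in HF1. rewrite Rmult_0_r in HF0.
  assert (Hg : Rabs (RInt (fun x => G1 x * K (q * x) / q) 0 1) <= (1 - 0) * (L * 2 / q)).
  { apply abs_RInt_le_const; [lra | unfold Rdiv; solve_ex_RInt |].
    intros x Hx. apply Rabs_mult_div_le; auto. }
  set (A1 := G 1 * K q / q) in *. set (A0 := G 0 * K 0 / q) in *.
  set (I := RInt _ 0 1) in Hg |- *.
  pose proof (Rabs_triang (A1 - A0) (- I)). pose proof (Rabs_triang A1 (- A0)).
  rewrite Rabs_Ropp in *. unfold Rminus in *.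
  replace ((4 * B + 2 * L) / q) with (B * 2 / q + B * 2 / q + L * 2 / q) by (field; lra).
  lra.
Qed.

Lemma RInt_cos_mul_mu_sin_dilated (theta theta1 : R -> R) (L q mu E alpha beta : R) :
  0 < q -> (forall x, is_derive theta x (theta1 x)) -> (forall x, continuous theta1 x) ->
  (forall x, Rabs (theta1 x) <= L) ->
  Rabs (RInt (fun t => cos (mu * sin (2 * PI * t) + beta)) 0 1) <= E ->
  Rabs (RInt (fun x => cos (theta x + alpha) * cos (mu * sin (2 * PI * (q * x)) + beta)) 0 1)
    <= E + (4 + 2 * L) / q.
Proof.
  intros Hq Dth Hth1 HL HE.
  assert (Hth : forall x, continuous theta x)
    by (intros x; exact (continuous_of_is_derive _ _ _ (Dth x))).
  assert (DG : forall x, is_derive (fun x => cos (theta x + alpha)) x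
                                   (- sin (theta x + alpha) * theta1 x)).
  { intros x. auto_derive; [exists (theta1 x); apply Dth|].
    replace (Derive (fun x : R => theta x) x) with (theta1 x)
      by (symmetry; apply is_derive_unique, Dth). ring. }
  assert (HG1 : forall x, Rabs (- sin (theta x + alpha) * theta1 x) <= L).
  { intros x. rewrite Rabs_mult, Rabs_Ropp, <- (Rmult_1_l L).
    apply Rmult_le_compat; try apply Rabs_pos; auto. apply Rabs_le, SIN_bound. }
  assert (Hper : forall t, cos (mu * sin (2 * PI * (t + 1)) + beta)
                           = cos (mu * sin (2 * PI * t) + beta)).
  { intros t. rewrite sin_2PI_periodic. reflexivity. }
  pose proof (RInt_mul_dilated_periodic _ _ (fun t => cos (mu * sin (2 * PI * t) + beta)) 1 L q
                Hq DG ltac:(intros; solve_continuous) ltac:(intros; apply Rabs_le, COS_bound) HG1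
                ltac:(intros; solve_continuous) Hper ltac:(intros; apply Rabs_le, COS_bound)) as Hmix.
  assert (HG : Rabs (RInt (fun x => cos (theta x + alpha)) 0 1) <= 1).
  { replace 1 with (1 - 0) at 2 by ring.
    apply abs_RInt_le_length; [lra | intros; solve_continuous | intros; apply Rabs_le, COS_bound]. }
  set (I := RInt _ 0 1) in Hmix |- *.
  set (A := RInt (fun x => cos (theta x + alpha)) 0 1) in *.
  set (Bh := RInt (fun t => cos (mu * sin (2 * PI * t) + beta)) 0 1) in *.
  assert (HAB : Rabs (A * Bh) <= E).
  { rewrite Rabs_mult, <- (Rmult_1_l E). apply Rmult_le_compat; try apply Rabs_pos; auto. }
  replace I with (A * Bh + (I - A * Bh)) by ring.
  eapply Rle_trans; [apply Rabs_triang|].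
  replace (4 + 2 * L) with (4 * 1 + 2 * L) by ring.
  apply Rplus_le_compat; assumption.
Qed.

Lemma sin_as_cos (z : R) : sin z = cos (z + - (PI / 2)).
Proof. rewrite <- Rminus_def, <- cos_neg, Ropp_minus_distr, cos_shift. reflexivity. Qed.

Lemma cos_plus_shifted (a b : R) :
  cos (a + b) = cos (a + 0) * cos (b + 0) - cos (a + - (PI / 2)) * cos (b + - (PI / 2)).
Proof. rewrite <- !sin_as_cos, !Rplus_0_r. apply cos_plus. Qed.

Lemma RInt_cos_phase_plus_mu_sin_dilated (theta theta1 : R -> R) (L q mu E : R) :
  0 < q -> (forall x, is_derive theta x (theta1 x)) -> (forall x, continuous theta1 x) ->
  (forall x, Rabs (theta1 x) <= L) ->
  (forall psi, Rabs (RInt (fun t => cos (mu * sin (2 * PI * t) + psi)) 0 1) <= E) ->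
  Rabs (RInt (fun x => cos (theta x + mu * sin (2 * PI * (q * x)))) 0 1)
    <= 2 * (E + (4 + 2 * L) / q).
Proof.
  intros Hq Dth Hth1 HL HE.
  assert (Hth : forall x, continuous theta x)
    by (intros x; exact (continuous_of_is_derive _ _ _ (Dth x))).
  set (P alpha x := cos (theta x + alpha) * cos (mu * sin (2 * PI * (q * x)) + alpha)).
  assert (HP : forall alpha, Rabs (RInt (P alpha) 0 1) <= E + (4 + 2 * L) / q)
    by (intros alpha; exact (RInt_cos_mul_mu_sin_dilated _ _ _ _ _ _ _ _ Hq Dth Hth1 HL (HE alpha))).
  rewrite (RInt_ext _ (fun x => P 0 x - P (- (PI / 2)) x)) by (intros x _; apply cos_plus_shifted).
  rewrite (RInt_minus (V := R_CompleteNormedModule)) by (unfold P; solve_ex_RInt).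
  unfold minus, plus, opp; simpl.
  eapply Rle_trans; [apply Rabs_triang|]. rewrite Rabs_Ropp.
  pose proof (HP 0). pose proof (HP (- (PI / 2))). lra.
Qed.

(** * Characters along the graph of Γ_n *)

Lemma sum1n_ext (u v : nat -> R) m :
  (forall j, (1 <= j <= m)%nat -> u j = v j) -> sum1n u m = sum1n v m.
Proof.
  induction m as [|m IH]; intros H; simpl; auto.
  rewrite IH by (intros; apply H; lia). rewrite H by lia. reflexivity.
Qed.

Lemma sum1n_is_derive (u du : nat -> R -> R) m x :
  (forall j, is_derive (u j) x (du j x)) ->
  is_derive (fun x => sum1n (fun j => u j x) m) x (sum1n (fun j => du j x) m).
Proof.
  intros H. induction m as [|m IH]; simpl.
  - apply (is_derive_const (K := R_AbsRing) (V := R_NormedModule)).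
  - apply (is_derive_plus (fun x => sum1n (fun j => u j x) m) (u (S m))); auto.
Qed.

Lemma Rabs_sum1n_le (u v : nat -> R) m :
  (forall j, Rabs (u j) <= v j) -> Rabs (sum1n u m) <= sum1n v m.
Proof.
  intros H. induction m as [|m IH]; simpl; [rewrite Rabs_R0; lra|].
  pose proof (Rabs_triang (sum1n u m) (u (S m))). pose proof (H (S m)). lra.
Qed.

Lemma sine_sum_is_derive (c : nat -> R) (q : nat -> nat) m x :
  is_derive (fun x => sum1n (fun j => c j * sin (2 * PI * INR (q j) * x)) m) x
    (sum1n (fun j => c j * (2 * PI * INR (q j) * cos (2 * PI * INR (q j) * x))) m).
Proof.
  apply (sum1n_is_derive (fun j x => c j * sin (2 * PI * INR (q j) * x))
           (fun j x => c j * (2 * PI * INR (q j) * cos (2 * PI * INR (q j) * x)))).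
  intros j. auto_derive; auto. ring.
Qed.

Lemma cosine_sum_bound (c : nat -> R) (q : nat -> nat) m x :
  Rabs (sum1n (fun j => c j * (2 * PI * INR (q j) * cos (2 * PI * INR (q j) * x))) m)
    <= sum1n (fun j => Rabs (c j) * (2 * PI * INR (q j))) m.
Proof.
  pose proof PI_RGT_0. apply Rabs_sum1n_le. intros j.
  assert (Hq : 0 <= 2 * PI * INR (q j)) by (pose proof (pos_INR (q j)); nra).
  rewrite Rabs_mult, (Rabs_mult (2 * PI * INR (q j))), (Rabs_right (2 * PI * INR (q j))) by lra.
  apply Rmult_le_compat_l; [apply Rabs_pos|].
  apply Rle_trans with (2 * PI * INR (q j) * 1); [|right; ring].
  apply Rmult_le_compat_l; [exact Hq | apply Rabs_le, COS_bound].
Qed.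

Lemma Gamma_continuous n c q y0 x : continuous (Gamma n c q y0) x.
Proof.
  unfold Gamma. solve_continuous.
Qed.

Lemma Gamma_succ m c q y0 x :
  Gamma (S m) c q y0 x = Gamma m c q y0 x - c (S m) * sin (2 * PI * INR (q (S m)) * x).
Proof. unfold Gamma. simpl. ring. Qed.

Lemma Gamma_ext n c q q' y0 x :
  (forall j, (1 <= j <= n)%nat -> q j = q' j) -> Gamma n c q y0 x = Gamma n c q' y0 x.
Proof.
  intros H. unfold Gamma. f_equal. apply sum1n_ext. intros j Hj. rewrite H by exact Hj.
  reflexivity.
Qed.

Lemma Gamma_is_derive n c q y0 x :
  is_derive (Gamma n c q y0) x
    (- sum1n (fun j => c j * (2 * PI * INR (q j) * cos (2 * PI * INR (q j) * x))) n).
Proof.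
  pose proof (is_derive_minus (fun _ : R => y0) _ x _ _
                (is_derive_const (V := R_NormedModule) y0 x) (sine_sum_is_derive c q n x)) as D.
  unfold minus, plus, opp, zero in D; simpl in D. rewrite Rplus_0_l in D. exact D.
Qed.

Lemma RInt_cos_character_Gamma_small (k l : Z) (eps : R) : l <> 0%Z -> 0 < eps ->
  exists ct, forall n c q, (1 <= n)%nat -> ct < c n ->
  exists qt : nat, forall q' y0, (forall j, (1 <= j < n)%nat -> q' j = q j) -> (qt < q' n)%nat ->
  forall phi,
  Rabs (RInt (fun x => cos (2 * PI * (IZR k * x + IZR l * Gamma n c q' y0 x) + phi)) 0 1) < eps.
Proof.
  intros Hl He. pose proof PI_RGT_0. pose proof PI2_1.
  destruct (RInt_cos_mu_sin_vanishes (eps / 4)) as [Lam [HLam0 HLam]]; [lra|].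
  exists Lam.
  intros n c q Hn Hc. destruct n as [|m]; [lia|].
  set (dlow x := sum1n (fun j => c j * (2 * PI * INR (q j) * cos (2 * PI * INR (q j) * x))) m).
  set (L := 2 * PI * (Rabs (IZR k) + Rabs (IZR l) * sum1n (fun j => Rabs (c j) * (2 * PI * INR (q j))) m)).
  destruct (INR_unbounded (4 * (4 + 2 * L) / eps)) as [qt Hqt]. exists qt.
  intros q' y0 Hq' HQ phi.
  set (Q := INR (q' (S m))).
  assert (HQpos : 0 < Q) by (apply lt_0_INR; lia).
  assert (Herr : (4 + 2 * L) / Q < eps / 4).
  { apply lt_INR in HQ. fold Q in HQ.
    apply (Rmult_lt_reg_r (4 * Q / eps)); [apply Rdiv_lt_0_compat; lra|].
    replace ((4 + 2 * L) / Q * (4 * Q / eps)) with (4 * (4 + 2 * L) / eps) by (field; lra).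
    replace (eps / 4 * (4 * Q / eps)) with Q by (field; lra). lra. }
  set (mu := - (2 * PI * IZR l * c (S m))).
  assert (Hmu : Lam < Rabs mu).
  { unfold mu. rewrite Rabs_Ropp, !Rabs_mult, (Rabs_right 2), (Rabs_right PI) by lra.
    rewrite (Rabs_right (c (S m))) by lra.
    assert (1 <= Rabs (IZR l)) by (rewrite <- abs_IZR; apply IZR_le; lia).
    assert (1 <= 2 * PI * Rabs (IZR l)) by nra. nra. }
  (* [theta] carries Γ_m; its derivative bound [L] does not depend on [y0], [phi] or [q' (S m)]. *)
  set (theta x := 2 * PI * (IZR k * x + IZR l * Gamma m c q y0 x) + phi).
  rewrite (RInt_ext _ (fun x => cos (theta x + mu * sin (2 * PI * (Q * x))))).
  2: { intros x _. rewrite Gamma_succ, (Gamma_ext m c q' q) by (intros; apply Hq'; lia).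
       unfold theta, mu, Q. rewrite <- (Rmult_assoc (2 * PI)). f_equal. ring. }
  eapply Rle_lt_trans.
  - apply (RInt_cos_phase_plus_mu_sin_dilated theta (fun x => 2 * PI * (IZR k - IZR l * dlow x))
             L Q mu (eps / 4) HQpos).
    + intros x. unfold theta. auto_derive; [exists (- dlow x); apply Gamma_is_derive|].
      replace (Derive (fun x : R => Gamma m c q y0 x) x) with (- dlow x)
        by (symmetry; apply is_derive_unique, Gamma_is_derive). ring.
    + intros x. unfold dlow. solve_continuous.
    + intros x. unfold L. rewrite Rabs_mult, (Rabs_right (2 * PI)) by lra.
      apply Rmult_le_compat_l; [lra|].
      eapply Rle_trans; [apply Rabs_triang|]. rewrite Rabs_Ropp, Rabs_mult.
      apply Rplus_le_compat_l, Rmult_le_compat_l; [apply Rabs_pos | apply cosine_sum_bound].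
    + intros psi. left. apply HLam. exact Hmu.
  - lra.
Qed.

(** * Trigonometric polynomials on the torus *)

Lemma sin_plus_2PI_IZR (x : R) (l : Z) : sin (x + 2 * PI * IZR l) = sin x.
Proof.
  assert (H2 : sin (2 * PI * IZR l) = 0)
    by (apply sin_eq_0_1; exists (2 * l)%Z; rewrite mult_IZR; ring).
  assert (H1 : sin (PI * IZR l) = 0) by (apply sin_eq_0_1; exists l; ring).
  rewrite sin_plus, H2, Rmult_assoc, cos_2a_sin, H1. ring.
Qed.

Lemma is_RInt_cos_integer_frequency (alpha : R) (l : Z) : l <> 0%Z ->
  is_RInt (fun y => cos (alpha + 2 * PI * IZR l * y)) 0 1 0.
Proof.
  intros Hl. pose proof PI_RGT_0.
  assert (Hl' : IZR l <> 0) by (apply not_0_IZR; exact Hl).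
  set (F y := sin (alpha + 2 * PI * IZR l * y) / (2 * PI * IZR l)).
  assert (HF : F 1 = F 0)
    by (unfold F; rewrite Rmult_1_r, Rmult_0_r, Rplus_0_r, sin_plus_2PI_IZR; reflexivity).
  pose proof (is_RInt_derive (V := R_CompleteNormedModule) F
                (fun y => cos (alpha + 2 * PI * IZR l * y)) 0 1) as FTC.
  rewrite HF, minus_eq_zero in FTC. apply FTC.
  - intros y _. unfold F. auto_derive; auto. field. split; lra.
  - intros y _. solve_continuous.
Qed.

Lemma is_RInt_scal_cexpi (a : C) (Phi : R -> R) (u v Ic Is : R) :
  is_RInt (fun x => cos (Phi x)) u v Ic -> is_RInt (fun x => sin (Phi x)) u v Is ->
  is_RInt (V := C_R_NormedModule) (fun x => Cmult a (cexpi (Phi x))) u v (Cmult a (Ic, Is)).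
Proof.
  intros Hc Hs. destruct a as [a1 a2].
  apply (is_RInt_fct_extend_pair (U := R_NormedModule) (V := R_NormedModule)); simpl.
  - eapply is_RInt_ext;
      [|exact (is_RInt_minus _ _ _ _ _ _ (is_RInt_scal _ _ _ a1 _ Hc) (is_RInt_scal _ _ _ a2 _ Hs))].
    intros x _. reflexivity.
  - eapply is_RInt_ext;
      [|exact (is_RInt_plus _ _ _ _ _ _ (is_RInt_scal _ _ _ a1 _ Hs) (is_RInt_scal _ _ _ a2 _ Hc))].
    intros x _. reflexivity.
Qed.

Definition char2 (k l : Z) (a : C) (x y : R) : C :=
  Cmult a (cexpi (2 * PI * (IZR k * x + IZR l * y))).

(* For [l = 0] the character does not depend on [y], so its value at [y = 0] is its mean. *)
Definition char2_mean_y (k l : Z) (a : C) (x : R) : C :=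
  if Z.eq_dec l 0 then char2 k l a x 0 else RtoC 0.

Fixpoint tp_mean_y (P : trig_poly2) (x : R) : C :=
  match P with
  | nil => RtoC 0
  | (k, l, a) :: P => Cplus (char2_mean_y k l a x) (tp_mean_y P x)
  end.

Lemma is_RInt_C_const (z : C) : is_RInt (V := C_R_NormedModule) (fun _ => z) 0 1 z.
Proof.
  pose proof (is_RInt_const (V := C_R_NormedModule) 0 1 z) as H.
  rewrite Rminus_0_r, (scal_one (V := C_R_NormedModule)) in H. exact H.
Qed.

Lemma is_RInt_char2_y k l a x :
  is_RInt (V := C_R_NormedModule) (char2 k l a x) 0 1 (char2_mean_y k l a x).
Proof.
  unfold char2_mean_y. destruct (Z.eq_dec l 0) as [->|Hl].
  - eapply is_RInt_ext; [|apply is_RInt_C_const].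
    intros y _. unfold char2. rewrite !Rmult_0_l. reflexivity.
  - replace (RtoC 0) with (Cmult a (0, 0)) by (apply injective_projections; simpl; ring).
    apply is_RInt_scal_cexpi.
    + eapply is_RInt_ext; [|apply (is_RInt_cos_integer_frequency (2 * PI * IZR k * x) l Hl)].
      intros y _. cbv beta. f_equal. ring.
    + eapply is_RInt_ext;
        [|apply (is_RInt_cos_integer_frequency (2 * PI * IZR k * x + - (PI / 2)) l Hl)].
      intros y _. cbv beta. rewrite sin_as_cos. f_equal. ring.
Qed.

Lemma int_T2_eq (P : trig_poly2) :
  int_T2 P = @RInt C_R_CompleteNormedModule (tp_mean_y P) 0 1.
Proof.
  unfold int_T2. apply (RInt_ext (V := C_R_CompleteNormedModule)). intros x _.
  apply (is_RInt_unique (V := C_R_CompleteNormedModule)).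
  induction P as [|[[k l] a] P IH].
  - apply is_RInt_C_const.
  - eapply is_RInt_ext; [|exact (is_RInt_plus _ _ _ _ _ _ (is_RInt_char2_y k l a x) IH)].
    intros y _. reflexivity.
Qed.

Lemma RInt_Cplus (f g : R -> C) :
  ex_RInt (V := C_R_CompleteNormedModule) f 0 1 -> ex_RInt (V := C_R_CompleteNormedModule) g 0 1 ->
  RInt (V := C_R_CompleteNormedModule) (fun x => Cplus (f x) (g x)) 0 1
  = Cplus (RInt (V := C_R_CompleteNormedModule) f 0 1) (RInt (V := C_R_CompleteNormedModule) g 0 1).
Proof.
  intros Hf Hg. apply (is_RInt_unique (V := C_R_CompleteNormedModule)).
  exact (is_RInt_plus _ _ _ _ _ _ (RInt_correct _ _ _ Hf) (RInt_correct _ _ _ Hg)).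
Qed.

Lemma ex_RInt_char2_curve k l a (g : R -> R) : (forall x, continuous g x) ->
  ex_RInt (V := C_R_CompleteNormedModule) (fun x => char2 k l a x (g x)) 0 1.
Proof.
  intros Hg. eexists. apply is_RInt_scal_cexpi;
    apply (RInt_correct (V := R_CompleteNormedModule)); solve_ex_RInt.
Qed.

Lemma ex_RInt_char2_mean_y k l a :
  ex_RInt (V := C_R_CompleteNormedModule) (char2_mean_y k l a) 0 1.
Proof.
  unfold char2_mean_y. destruct (Z.eq_dec l 0).
  - apply (ex_RInt_char2_curve k l a (fun _ => 0)). intros; apply continuous_const.
  - exists (RtoC 0). apply is_RInt_C_const.
Qed.

Lemma ex_RInt_tp_curve (P : trig_poly2) (g : R -> R) : (forall x, continuous g x) ->
  ex_RInt (V := C_R_CompleteNormedModule) (fun x => tp_eval P x (g x)) 0 1.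
Proof.
  intros Hg. induction P as [|[[k l] a] P IH].
  - exists (RtoC 0). apply is_RInt_C_const.
  - eapply ex_RInt_ext; [|exact (ex_RInt_plus _ _ _ _ (ex_RInt_char2_curve k l a g Hg) IH)].
    intros x _. reflexivity.
Qed.

Lemma ex_RInt_tp_mean_y (P : trig_poly2) :
  ex_RInt (V := C_R_CompleteNormedModule) (tp_mean_y P) 0 1.
Proof.
  induction P as [|[[k l] a] P IH].
  - exists (RtoC 0). apply is_RInt_C_const.
  - eapply ex_RInt_ext; [|exact (ex_RInt_plus _ _ _ _ (ex_RInt_char2_mean_y k l a) IH)].
    intros x _. reflexivity.
Qed.

Lemma Cmod_pair_lt (x y e : R) : Rabs x < e -> Rabs y < e -> Cmod (x, y) < 2 * e.
Proof.
  intros Hx Hy. eapply Rle_lt_trans; [apply Cmod_2Rmax|]. simpl.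
  assert (Hmax : Rmax (Rabs x) (Rabs y) < e) by (apply Rmax_lub_lt; auto).
  assert (Hsqrt : sqrt 2 < 2)
    by (rewrite <- (sqrt_square 2) at 2 by lra; apply sqrt_lt_1_alt; lra).
  pose proof (Rmax_l (Rabs x) (Rabs y)). pose proof (Rabs_pos x). pose proof Rlt_sqrt2_0.
  nra.
Qed.

Lemma RInt_char2_Gamma_close_to_mean (k l : Z) (a : C) (eps : R) : 0 < eps ->
  exists ct, forall n c q, (1 <= n)%nat -> ct < c n ->
  exists qt : nat, forall q' y0, (forall j, (1 <= j < n)%nat -> q' j = q j) -> (qt < q' n)%nat ->
  Cmod (Cminus (RInt (V := C_R_CompleteNormedModule) (fun x => char2 k l a x (Gamma n c q' y0 x)) 0 1)
               (RInt (V := C_R_CompleteNormedModule) (char2_mean_y k l a) 0 1)) < eps.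
Proof.
  intros He. destruct (Z.eq_dec l 0) as [->|Hl].
  - exists 0. intros n c q _ _. exists 0%nat. intros q' y0 _ _.
    rewrite (RInt_ext (V := C_R_CompleteNormedModule) _ (char2_mean_y k 0 a)).
    + replace (Cminus _ _) with (RtoC 0) by field. rewrite Cmod_0. exact He.
    + intros x _. unfold char2_mean_y, char2. simpl. rewrite !Rmult_0_l. reflexivity.
  - pose proof (Cmod_ge_0 a) as Ha.
    set (e := eps / (2 * (Cmod a + 1))).
    destruct (RInt_cos_character_Gamma_small k l e Hl) as [ct Hct];
      [apply Rdiv_lt_0_compat; lra|].
    exists ct. intros n c q Hn Hc. destruct (Hct n c q Hn Hc) as [qt Hqt].
    exists qt. intros q' y0 Hq' HQ.
    pose proof (Gamma_continuous n c q' y0) as Hg.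
    set (Phi x := 2 * PI * (IZR k * x + IZR l * Gamma n c q' y0 x)).
    set (Ic := RInt (fun x => cos (Phi x)) 0 1).
    set (Is := RInt (fun x => sin (Phi x)) 0 1).
    assert (HIc : Rabs Ic < e).
    { unfold Ic. rewrite (RInt_ext _ (fun x => cos (Phi x + 0)))
        by (intros; rewrite Rplus_0_r; reflexivity). apply Hqt; auto. }
    assert (HIs : Rabs Is < e).
    { unfold Is. rewrite (RInt_ext _ (fun x => cos (Phi x + - (PI / 2))))
        by (intros; apply sin_as_cos). apply Hqt; auto. }
    rewrite (is_RInt_unique (V := C_R_CompleteNormedModule) _ 0 1 (Cmult a (Ic, Is)))
      by (apply is_RInt_scal_cexpi; apply (RInt_correct (V := R_CompleteNormedModule)); solve_ex_RInt).
    rewrite (is_RInt_unique (V := C_R_CompleteNormedModule) (char2_mean_y k l a) 0 1 (RtoC 0)).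
    2: { eapply is_RInt_ext; [|apply is_RInt_C_const]. intros x _.
         unfold char2_mean_y. destruct (Z.eq_dec l 0); [contradiction | reflexivity]. }
    replace (Cminus _ _) with (Cmult a (Ic, Is)) by field.
    rewrite Cmod_mult.
    pose proof (Cmod_pair_lt Ic Is e HIc HIs) as HCmod.
    assert (He2 : Cmod a * (2 * e) < eps).
    { unfold e. replace (Cmod a * (2 * (eps / (2 * (Cmod a + 1))))) with (eps * (Cmod a / (Cmod a + 1)))
        by (field; lra).
      rewrite <- (Rmult_1_r eps) at 2. apply Rmult_lt_compat_l; auto.
      apply (Rmult_lt_reg_r (Cmod a + 1)); [lra|].
      unfold Rdiv. rewrite Rmult_assoc, Rinv_l by lra. lra. }
    eapply Rle_lt_trans; [|exact He2].
    apply Rmult_le_compat_l; [exact Ha | left; exact HCmod].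
Qed.

Lemma Cmod_Cminus_Cplus_le (u v w z : C) :
  Cmod (Cminus (Cplus u v) (Cplus w z)) <= Cmod (Cminus u w) + Cmod (Cminus v z).
Proof.
  replace (Cminus (Cplus u v) (Cplus w z)) with (Cplus (Cminus u w) (Cminus v z)) by field.
  apply Cmod_triangle.
Qed.

Lemma RInt_tp_Gamma_close_to_mean (P : trig_poly2) (eps : R) : 0 < eps ->
  exists ct, forall n c q, (1 <= n)%nat -> ct < c n ->
  exists qt : nat, forall q' y0, (forall j, (1 <= j < n)%nat -> q' j = q j) -> (qt < q' n)%nat ->
  Cmod (Cminus (RInt (V := C_R_CompleteNormedModule) (fun x => tp_eval P x (Gamma n c q' y0 x)) 0 1)
               (RInt (V := C_R_CompleteNormedModule) (tp_mean_y P) 0 1)) < eps.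
Proof.
  revert eps. induction P as [|[[k l] a] P IH]; intros eps He.
  - exists 0. intros n c q _ _. exists 0%nat. intros q' y0 _ _.
    change (fun x => tp_eval nil x (Gamma n c q' y0 x)) with (fun _ : R => RtoC 0).
    change (tp_mean_y nil) with (fun _ : R => RtoC 0).
    replace (Cminus _ _) with (RtoC 0) by field. rewrite Cmod_0. exact He.
  - destruct (RInt_char2_Gamma_close_to_mean k l a (eps / 2)) as [ct1 H1]; [lra|].
    destruct (IH (eps / 2)) as [ct2 H2]; [lra|].
    exists (Rmax ct1 ct2). intros n c q Hn Hc.
    destruct (H1 n c q Hn) as [qt1 Hq1]; [eapply Rle_lt_trans; [apply Rmax_l | exact Hc]|].
    destruct (H2 n c q Hn) as [qt2 Hq2]; [eapply Rle_lt_trans; [apply Rmax_r | exact Hc]|].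
    exists (Nat.max qt1 qt2). intros q' y0 Hq' HQ.
    specialize (Hq1 q' y0 Hq' ltac:(lia)). specialize (Hq2 q' y0 Hq' ltac:(lia)).
    pose proof (Gamma_continuous n c q' y0) as Hg.
    rewrite (RInt_ext (V := C_R_CompleteNormedModule) (fun x => tp_eval _ x _)
               (fun x => Cplus (char2 k l a x (Gamma n c q' y0 x)) (tp_eval P x (Gamma n c q' y0 x))))
      by (intros; reflexivity).
    rewrite (RInt_ext (V := C_R_CompleteNormedModule) (tp_mean_y _)
               (fun x => Cplus (char2_mean_y k l a x) (tp_mean_y P x)))
      by (intros; reflexivity).
    rewrite (RInt_Cplus _ _ (ex_RInt_char2_curve k l a _ Hg) (ex_RInt_tp_curve P _ Hg)),
            (RInt_Cplus _ _ (ex_RInt_char2_mean_y k l a) (ex_RInt_tp_mean_y P)).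
    eapply Rle_lt_trans; [apply Cmod_Cminus_Cplus_le|]. lra.
Qed.

Theorem lemma5p1 :
  forall (P : trig_poly2) (eps : R), 0 < eps ->
  exists ct : R,
  forall (n : nat) (c : nat -> R) (q : nat -> nat),
    (1 <= n)%nat ->
    (forall j, (1 <= j <= n)%nat -> 0 < c j) ->
    (forall j, (1 <= j < n)%nat -> (0 < q j)%nat) ->
    ct < c n ->
    exists qt : nat,
    forall (q' : nat -> nat) (y0 : R),
      (forall j, (1 <= j < n)%nat -> q' j = q j) ->
      (qt < q' n)%nat ->
      Cmod (Cminus (int_mu n c q' y0 P) (int_T2 P)) < eps.
Proof.
  intros P eps He. destruct (RInt_tp_Gamma_close_to_mean P eps He) as [ct Hct].
  exists ct. intros n c q Hn _ _ Hc. destruct (Hct n c q Hn Hc) as [qt Hqt].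
  exists qt. intros q' y0 Hq' HQ. rewrite int_T2_eq. apply Hqt; assumption.
Qed.
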